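(* Let $G=(V,E)$ be a finite simple graph with at least one vertex, $k>0$, and let $\mathcal F^*$ be the set of all stars $\{(A_1,B_1),(A_2,B_2),(A_3,B_3)\}\subseteq\vec S_k$ (elements not necessarily distinct) with $G[A_1]\cup G[A_2]\cup G[A_3]=G$. Then $\mathcal F^*$ is closed under shifting (with respect to $\vec S_k$ inside the universe $\vec U$ of oriented vertex separations of $G$): whenever $\vec s_0\in\vec S_k$ is linked to some $\vec r\le\vec s_0$ in $\vec S_k$ that is not forced by $\mathcal F^*$, then $\vec s_0$ is $\mathcal F^*$-linked to $\vec r$.
   Context: An oriented vertex separation of $G$ is an ordered pair $(A,B)$ with $A\cup B=V$ and no edge between $A\setminus B$ and $B\setminus A$. They form a universe $\vec U$ with $(A,B)\le(C,D)$ iff $A\subseteq C$, $B\supseteq D$; $(A,B)^*=(B,A)$; $(A,B)\vee(C,D)=(A\cup C,B\cap D)$; $(A,B)\wedge(C,D)=(A\cap C,B\cup D)$. $\vec S_k=\{(A,B)\in\vec U:|A\cap B|<k\}$, and $S_k$ is its set of separations $s=\{\vec s,\vec s^{\,*}\}$; write $\overleftarrow s=\vec s^{\,*}$; $s$ is degenerate if $\vec s=\overleftarrow s$; $\vec r$ is trivial if some $s\in S_k$ has $\vec r<\vec s$ and $\vec r<\overleftarrow s$. A star is a nonempty set $\sigma$ with $\vec r\le\overleftarrow s$ for all distinct $\vec r,\vec s\in\sigma$. $\mathcal F$ forces $\vec r$ if $\{\overleftarrow r\}\in\mathcal F$ or $r$ is degenerate (elements not forced by $\mathcal F^*$ are nontrivial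 and nondegenerate). For nontrivial nondegenerate $\vec r$, $\vec S_{\ge\vec r}$ is the set of all orientations of separations in $S_k$ having an orientation $\ge\vec r$, and for $\vec s_0\ge\vec r$ the shifting map $f:\vec S_{\ge\vec r}\to\vec U$ is $f(\vec s)=\vec s\vee\vec s_0$, $f(\overleftarrow s)=(\vec s\vee\vec s_0)^*$ for all $\vec s\in\vec S_{\ge\vec r}\setminus\{\overleftarrow r\}$ with $\vec s\ge\vec r$. $\vec s_0$ is linked to $\vec r$ if $\vec s_0\ge\vec r$ and $\vec s\vee\vec s_0\in\vec S_k$ for all $\vec s\in\vec S_k$ with $\vec s\ge\vec r$, $\vec s\ne\overleftarrow r$; it is $\mathcal F$-linked to $\vec r$ if moreover $f(\sigma)\in\mathcal F$ for every star $\sigma\in\mathcal F$ with $\sigma\subseteq\vec S_{\ge\vec r}\setminus\{\overleftarrow r\}$ having an element $\ge\vec r$. *)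

From mathcomp Require Import all_boot.
Set Implicit Arguments. Unset Strict Implicit. Unset Printing Implicit Defensive.

Section Seps.
Variables (T : finType) (e : rel T) (k : nat).

Definition osep : finType := ({set T} * {set T})%type.

Definition is_sep (x : osep) : bool :=
  (x.1 :|: x.2 == setT) &&
  [forall u, forall v, ((u \in x.1 :\: x.2) && (v \in x.2 :\: x.1)) ==> ~~ e u v].

Definition sep_le (x y : osep) : bool := (x.1 \subset y.1) && (y.2 \subset x.2).
Definition sep_lt (x y : osep) : bool := sep_le x y && (x != y).
Definition sep_inv (x : osep) : osep := (x.2, x.1).
Definition sep_join (x y : osep) : osep := (x.1 :|: y.1, x.2 :&: y.2).
Definition sep_meet (x y : osep) : osep := (x.1 :&: y.1, x.2 :|: y.2).

Definition in_Sk (x : osep) : bool := is_sep x && (#|x.1 :&: x.2| < k).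

Definition degenerate (x : osep) : bool := x == sep_inv x.

Definition trivial_sep (r : osep) : Prop :=
  exists s, in_Sk s /\ sep_lt r s /\ sep_lt r (sep_inv s).

Definition is_star (sigma : {set osep}) : bool :=
  (sigma != set0) &&
  [forall x in sigma, forall y in sigma, (x != y) ==> sep_le x (sep_inv y)].

Definition covers3 (A1 A2 A3 : {set T}) : bool :=
  [forall v, [|| v \in A1, v \in A2 | v \in A3]] &&
  [forall u, forall v, e u v ==>
     [|| (u \in A1) && (v \in A1), (u \in A2) && (v \in A2)
       | (u \in A3) && (v \in A3)]].

Definition Fstar (sigma : {set osep}) : Prop :=
  exists a1 a2 a3 : osep,
    [/\ in_Sk a1 && in_Sk a2 && in_Sk a3, sigma = [set a1; a2; a3],
        is_star sigma & covers3 a1.1 a2.1 a3.1].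

Definition forces (F : {set osep} -> Prop) (r : osep) : Prop :=
  F [set sep_inv r] \/ degenerate r.

Definition S_ge (r x : osep) : bool :=
  in_Sk x && (sep_le r x || sep_le r (sep_inv x)).

(* shifting map f (agrees with the paper's on S_{>=r} \ {r^*} for nontrivial
   nondegenerate r) *)
Definition shift (r s0 x : osep) : osep :=
  if sep_le r x then sep_join x s0 else sep_inv (sep_join (sep_inv x) s0).

Definition linked (r s0 : osep) : Prop :=
  sep_le r s0 /\
  forall s, in_Sk s -> sep_le r s -> s != sep_inv r -> in_Sk (sep_join s s0).

Definition F_linked (F : {set osep} -> Prop) (r s0 : osep) : Prop :=
  linked r s0 /\
  forall sigma : {set osep}, F sigma -> is_star sigma ->
    sigma \subset [set x | S_ge r x && (x != sep_inv r)] ->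
    (exists2 x, x \in sigma & sep_le r x) ->
    F (shift r s0 @: sigma).

Definition closed_under_shifting (F : {set osep} -> Prop) : Prop :=
  forall s0 r, in_Sk s0 -> in_Sk r -> sep_le r s0 -> ~ forces F r ->
    linked r s0 -> F_linked F r s0.

End Seps.

From mathcomp Require Import all_boot.
Set Implicit Arguments. Unset Strict Implicit. Unset Printing Implicit Defensive.

(* If r is not forced, then r.2 is a proper subset of V: otherwise {r^*} is a
   star whose small side is V, hence lies in F^*.  Consequently a star in
   S_{>=r} has at most one element above r, so shifting with x |-> x v s0 on
   that element and x |-> x ^ s0^* on the others keeps it a star.  The shifted
   star still covers G: s0 is a separation, so every vertex and edge of G lies
   in G[s0.1], which the shifted element above r contains, or in G[s0.2],
   where each shifted small side contains the old one. *)

Section SepOrder.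
Variable T : finType.
Implicit Types x y z r s : osep T.

Lemma sep_invK : involutive (@sep_inv T).
Proof. by case. Qed.

Lemma sep_inv_join x y :
  sep_inv (sep_join x y) = sep_meet (sep_inv x) (sep_inv y).
Proof. by []. Qed.

Lemma sep_inv_meet x y :
  sep_inv (sep_meet x y) = sep_join (sep_inv x) (sep_inv y).
Proof. by []. Qed.

Lemma sep_le_trans y x z : sep_le x y -> sep_le y z -> sep_le x z.
Proof.
case/andP=> [x1y1 y2x2] /andP [y1z1 z2y2].
by rewrite /sep_le (subset_trans x1y1 y1z1) (subset_trans z2y2 y2x2).
Qed.

Lemma sep_le_join2r z x y : sep_le x y -> sep_le (sep_join x z) (sep_join y z).
Proof. by case/andP=> x1y1 y2x2; rewrite /sep_le setSU // setSI. Qed.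

Lemma sep_le_meet2r z x y : sep_le x y -> sep_le (sep_meet x z) (sep_meet y z).
Proof. by case/andP=> x1y1 y2x2; rewrite /sep_le setSI // setSU. Qed.

Lemma sep_le_joinl x y : sep_le x (sep_join x y).
Proof. by rewrite /sep_le subsetUl subsetIl. Qed.

Lemma sep_le_meetl x y : sep_le (sep_meet x y) x.
Proof. by rewrite /sep_le subsetIl subsetUl. Qed.

Lemma shift_join r s x : sep_le r x -> shift r s x = sep_join x s.
Proof. by rewrite /shift => ->. Qed.

Lemma shift_meet r s x :
  ~~ sep_le r x -> shift r s x = sep_meet x (sep_inv s).
Proof. by rewrite /shift sep_inv_join sep_invK => /negbTE ->. Qed.

Lemma shift1_sub r s x : x.1 :&: s.2 \subset (shift r s x).1.
Proof.
have [rx|rNx] := boolP (sep_le r x); last by rewrite shift_meet.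
by rewrite shift_join //= (subset_trans (subsetIl _ _)) ?subsetUl.
Qed.

Lemma shift_le_inv r s x y :
  sep_le x (sep_inv y) -> ~~ (sep_le r x && sep_le r y) ->
  sep_le (shift r s x) (sep_inv (shift r s y)).
Proof.
move=> xy; have [rx|rNx] := boolP (sep_le r x); have [ry|rNy] := boolP (sep_le r y) => //= _.
- by rewrite shift_join // shift_meet // sep_inv_meet sep_invK sep_le_join2r.
- by rewrite shift_meet // shift_join // sep_inv_join sep_le_meet2r.
- rewrite shift_meet // shift_meet // sep_inv_meet sep_invK.
  exact: sep_le_trans (sep_le_meetl _ _) (sep_le_trans xy (sep_le_joinl _ _)).
Qed.

End SepOrder.

Section Separations.
Variables (T : finType) (e : rel T) (k : nat).
Implicit Types x y r s : osep T.

Lemma is_sep_cover x v : is_sep e x -> (v \in x.1) || (v \in x.2).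
Proof. by case/andP=> /eqP x12 _; rewrite -in_setU x12 inE. Qed.

Lemma star_pair_full r x y :
  is_sep e y -> sep_le r x -> sep_le r y -> sep_le x (sep_inv y) -> r.2 = setT.
Proof.
move=> /is_sep_cover y12 /andP [_ /subsetP x2r2] /andP [_ /subsetP y2r2].
case/andP=> [_ /subsetP y1x2]; apply/setP => v; rewrite inE.
by case/orP: (y12 v) => [/y1x2/x2r2 | /y2r2].
Qed.

Lemma is_star_shift r s (sigma : {set osep T}) :
  r.2 != setT -> {in sigma, forall x, is_sep e x} -> is_star sigma ->
  is_star (shift r s @: sigma).
Proof.
move=> r2N sep_sigma /andP [/set0Pn [x0 x0_sigma] /forall_inP star_sigma].
rewrite /is_star; apply/andP; split; first by apply/set0Pn; exists (shift r s x0); apply: imset_f.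
apply/forall_inP => _ /imsetP [x x_sigma ->]; apply/forall_inP => _ /imsetP [y y_sigma ->].
apply/implyP => fxy; have xy : x != y by apply: contraNneq fxy => ->.
have le_xy : sep_le x (sep_inv y) by move/forall_inP/(_ y y_sigma)/implyP: (star_sigma x x_sigma); apply.
apply: shift_le_inv => //; apply/negP => /andP [rx ry].
by move/eqP: r2N; apply; apply: star_pair_full (sep_sigma y y_sigma) rx ry le_xy.
Qed.

Hypothesis e_sym : symmetric e.

Lemma is_sep_inv x : is_sep e (sep_inv x) = is_sep e x.
Proof.
rewrite /is_sep /= setUC; congr (_ && _).
by apply/forallP/forallP => sepx u; apply/forallP => v; apply/implyP => /andP [uv vu];
  move/forallP/(_ u)/implyP: (sepx v); rewrite uv vu e_sym; apply.
Qed.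

Lemma in_Sk_inv x : in_Sk e k (sep_inv x) = in_Sk e k x.
Proof. by rewrite /in_Sk is_sep_inv /= setIC. Qed.

Lemma is_sep_edge x u v :
  is_sep e x -> e u v -> (u \in x.1) && (v \in x.1) || (u \in x.2) && (v \in x.2).
Proof.
move=> sepx euv; have /andP [_ /forallP no_cross] := sepx.
move: (forallP (no_cross u) v) (forallP (no_cross v) u).
move: (is_sep_cover u sepx) (is_sep_cover v sepx).
by rewrite (e_sym v u) euv !inE; do !case: (_ \in _).
Qed.

Lemma covers3_shift s (A1 A2 A3 B1 B2 B3 : {set T}) :
  is_sep e s -> covers3 e A1 A2 A3 ->
  A1 :&: s.2 \subset B1 -> A2 :&: s.2 \subset B2 -> A3 :&: s.2 \subset B3 ->
  [|| s.1 \subset B1, s.1 \subset B2 | s.1 \subset B3] ->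
  covers3 e B1 B2 B3.
Proof.
move=> seps /andP [/forallP coverV /forallP coverE] AB1 AB2 AB3 s1B.
have lift (A B : {set T}) u : A :&: s.2 \subset B -> u \in s.2 -> u \in A -> u \in B.
  by move=> /subsetP AB us uA; apply: AB; rewrite inE uA.
apply/andP; split.
  apply/forallP => v; case/orP: (is_sep_cover v seps) => vs.
    by case/or3P: s1B => /subsetP/(_ v vs) ->; rewrite ?orbT.
  case/or3P: (coverV v) => vA; apply/or3P; [apply: Or31 | apply: Or32 | apply: Or33].
  - exact: lift AB1 vs vA.
  - exact: lift AB2 vs vA.
  - exact: lift AB3 vs vA.
apply/forallP => u; apply/forallP => v; apply/implyP => euv.
case/orP: (is_sep_edge seps euv) => /andP [us vs].
  by case/or3P: s1B => /subsetP sB; rewrite !sB ?orbT.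
move/forallP/(_ v)/implyP/(_ euv): (coverE u).
case/or3P=> /andP [uA vA]; apply/or3P; [apply: Or31 | apply: Or32 | apply: Or33].
- by rewrite (lift _ _ _ AB1 us uA) (lift _ _ _ AB1 vs vA).
- by rewrite (lift _ _ _ AB2 us uA) (lift _ _ _ AB2 vs vA).
- by rewrite (lift _ _ _ AB3 us uA) (lift _ _ _ AB3 vs vA).
Qed.

Lemma Fstar_set1 x : in_Sk e k x -> x.1 = setT -> Fstar e k [set x].
Proof.
move=> Skx x1; exists x, x, x; split; rewrite ?Skx ?setUid //.
  apply/andP; split; first by apply/set0Pn; exists x; rewrite inE.
  by apply/forall_inP => y /set1P ->; apply/forall_inP => z /set1P ->; rewrite eqxx.
by rewrite /covers3 x1; apply/andP; split; apply/forallP => u;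
  rewrite ?inE //; apply/forallP => v; rewrite !inE implybT.
Qed.

Lemma shift_in_Sk r s x :
  linked e k r s -> in_Sk e k x -> sep_le r x || sep_le r (sep_inv x) ->
  x != sep_inv r -> in_Sk e k (shift r s x).
Proof.
case=> _ link Skx; rewrite /shift; case: ifP => [rx _ | rNx /= rxi _].
  exact: link.
rewrite in_Sk_inv link ?in_Sk_inv //.
by apply: contraFneq rNx => /(can_inj (@sep_invK _)) ->; rewrite /sep_le !subxx.
Qed.

End Separations.

Theorem lemma5p3 (T : finType) (e : rel T)
  (e_sym : symmetric e) (e_irr : irreflexive e) (T_ne : 0 < #|T|)
  (k : nat) (k_pos : 0 < k) :
  closed_under_shifting e k (Fstar e k).
Proof.
move=> s0 r Sk_s0 Sk_r _ r_unforced linked_s0; split=> //.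
move=> _ [a1 [a2 [a3 [_ -> star_a cover_a]]]] _ sub_Sge [x0 x0_a r_x0].
set sigma := [set a1; a2; a3] in x0_a star_a sub_Sge *.
have r2N : r.2 != setT.
  by apply/eqP => r2; apply: r_unforced; left; apply: Fstar_set1; rewrite ?in_Sk_inv.
have Sge_sigma x : x \in sigma ->
    [/\ in_Sk e k x, sep_le r x || sep_le r (sep_inv x) & x != sep_inv r].
  by move/(subsetP sub_Sge); rewrite inE => /andP [/andP [Skx rx] xNr].
have [a1_sigma a2_sigma a3_sigma] : [/\ a1 \in sigma, a2 \in sigma & a3 \in sigma].
  by rewrite !inE !eqxx ?orbT.
have Sk_shift x : x \in sigma -> in_Sk e k (shift r s0 x).
  by case/Sge_sigma => Skx rx xNr; apply: shift_in_Sk.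
exists (shift r s0 a1), (shift r s0 a2), (shift r s0 a3); split.
- by rewrite !Sk_shift.
- by rewrite !imsetU !imset_set1.
- by apply: (is_star_shift (e := e)) => // x /Sge_sigma [/andP [sepx _] _ _].
- have [sep_s0 _] := andP Sk_s0.
  apply: (covers3_shift e_sym sep_s0 cover_a); rewrite ?shift1_sub //.
  have s0_x0 : s0.1 \subset (shift r s0 x0).1 by rewrite shift_join ?subsetUr.
  by move: x0_a; rewrite !inE -orbA => /or3P [] /eqP <-; rewrite s0_x0 ?orbT.
Qed.
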